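(* Assume $L/F$ is unramified. If $\Phi\in\pi_{\tau,\chi}^{K_n}$ with $n\ge1$, then $\operatorname{supp}(\Phi)\subset\mathfrak p_L^{\lceil(c-n)/2\rceil}$ and $\Phi$ is constant on cosets of $\mathfrak p_L^{\,c-\lceil(c-n)/2\rceil}$.
   Context: $F$ is a $p$-adic field with $p\ne2$, ring of integers $\mathcal O$ with maximal ideal $\mathfrak p$, residue field of order $q$. $L/F$ is a quadratic extension with ring of integers $\mathcal O_L$, maximal ideal $\mathfrak p_L$, conjugation $x\mapsto\overline x$, norm $N:L\to F$, $L^1=\ker N$; $\omega$ is the nontrivial character of $F^\times/N(L^\times)$. $\chi$ is a character of $L^\times$ not factoring through $N$. $\tau$ is a nontrivial additive character of $F$ with conductor $\mathfrak p^c$, i.e. $\tau$ is trivial on $\mathfrak p^m$ iff $m\ge c$. Put $\langle x,y\rangle=\tau(\operatorname{tr}_{L/F}(xy))$ and $\widehat\Phi(x)=\int_L\Phi(y)\langle x,y\rangle\,dy$ for Schwartz functions $\Phi$ on $L$, with Haar measure normalized so that $\widehat{\widehat\Phi}(x)=\Phi(-x)$. $\mathcal S(L)_\chi$ is the space of Schwartz functions with $\Phi(xy)=\chi(y)^{-1}\Phi(x)$ for $y\in L^1$. $G_+=\{g\in GL_2(F):\det g\in N(L^\times)\}$, and $\pi_{\tau,\chi}$ is the irreducible representation of $G_+$ on $\mathcal S(L)_\chi$ satisfying $\pi_{\tau,\chi}\begin{pmatrix}1&u\\0&1\end{pmatrix}\Phi(x)=\tau(uN(x))\Phi(x)$, $\pi_{\tau,\chi}\begin{pmatrix}a&0\\0&a^{-1}\end{pmatrix}\Phi(x)=\omega(a)|a|_L^{1/2}\Phi(ax)$,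 $\pi_{\tau,\chi}\begin{pmatrix}0&1\\-1&0\end{pmatrix}\Phi(x)=\gamma\widehat\Phi(\overline x)$ for some complex $\gamma$ with $|\gamma|=1$. $K_n$ is the principal congruence subgroup of $GL_2(F)$ of level $n$ (contained in $G_+$ for $n\ge1$). *)

From HB Require Import structures.
From mathcomp Require Import all_boot all_order all_algebra all_field.
Set Implicit Arguments. Unset Strict Implicit. Unset Printing Implicit Defensive.
Import Order.TTheory GRing.Theory Num.Theory.
Local Open Scope ring_scope.

(* The base field F with its normalized discrete valuation v : F -> int *)
(* (the value v 0 is irrelevant: 0 lies in every power of the ideal).  *)

Definition inPow (F : fieldType) (v : F -> int) (m : int) (x : F) : bool :=
  (x == 0) || (m <= v x).

Definition is_pAdic_field (F : fieldType) (v : F -> int) (p q : nat) : Prop :=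
  (forall x y : F, x != 0 -> y != 0 -> v (x * y) = v x + v y) /\
  (forall x y : F, x != 0 -> y != 0 -> x + y != 0 ->
          (v x <= v (x + y)) || (v y <= v (x + y))) /\
  (exists w : F, w != 0 /\ v w = 1) /\
  (forall u : nat -> F,
          (forall m : int, exists N : nat, forall i j : nat, (N <= i)%N -> (N <= j)%N ->
               inPow v m (u i - u j)) ->
          exists l : F, forall m : int, exists N : nat, forall i : nat, (N <= i)%N ->
               inPow v m (u i - l)) /\
  (forall k : nat, (0 < k)%N -> (k%:R : F) != 0) /\
      (* residue field O/p has characteristic p, p prime, p <> 2 *)
  [/\ prime p, p != 2%N & inPow v 1 (p%:R : F)] /\
      (* residue field O/p has exactly q elements *)
      (exists s : seq F,
          [/\ size s = q,
              (forall i, (i < q)%N -> inPow v 0 (nth 0 s i)),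
              (forall i j, (i < q)%N -> (j < q)%N -> i != j ->
                   ~~ inPow v 1 (nth 0 s i - nth 0 s j))
            & (forall x, inPow v 0 x -> exists2 i, (i < q)%N & inPow v 1 (x - nth 0 s i))]).

Definition is_quad_ext (F : fieldType) (L : fieldExtType F) (sig : L -> L)
    (nF tF : L -> F) : Prop :=
  \dim {:L} = 2%N /\
  [/\ (forall x y, sig (x + y) = sig x + sig y),
      (forall x y, sig (x * y) = sig x * sig y),
      (forall a : F, sig (a%:A) = a%:A),
      (forall x, sig (sig x) = x)
    & (exists x, sig x != x)] /\
  (forall x, (nF x)%:A = x * sig x) /\
  (forall x, (tF x)%:A = x + sig x).

(* The valuation of F extends to L by w(x) = v(N x)/2; L/F is unramified
   (ramification index 1) iff w takes integer values on L^x. *)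
Definition unramified (F : fieldType) (L : fieldExtType F) (v : F -> int)
    (nF : L -> F) : Prop :=
  forall x : L, x != 0 -> (2 %| v (nF x))%Z.

(* x \in p_L^k, for L/F unramified (so v_L(x) = v(N x)/2) *)
Definition inPowL (F : fieldType) (L : fieldExtType F) (v : F -> int)
    (nF : L -> F) (k : int) (x : L) : bool :=
  (x == 0) || (2 * k <= v (nF x)).

Definition schwartz (F : fieldType) (L : fieldExtType F) (v : F -> int)
    (nF : L -> F) (C : numClosedFieldType) (Phi : L -> C) : Prop :=
  (exists k : int, forall x y : L, inPowL v nF k (x - y) -> Phi x = Phi y) /\
  (exists k : int, forall x : L, Phi x != 0 -> inPowL v nF k x).

Definition haar_integral (F : fieldType) (L : fieldExtType F) (v : F -> int)
    (nF : L -> F) (C : numClosedFieldType) (I : (L -> C) -> C) : Prop :=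
  [/\ (forall f g, schwartz v nF f -> schwartz v nF g ->
          I (fun x => f x + g x) = I f + I g),
      (forall (a : C) f, schwartz v nF f -> I (fun x => a * f x) = a * I f),
      (forall (a : L) f, schwartz v nF f -> I (fun x => f (x + a)) = I f)
    & 0 < I (fun x => if inPowL v nF 0 x then 1 else 0)].

Definition fourier (F : fieldType) (L : fieldExtType F) (C : numClosedFieldType)
    (tau : F -> C) (tF : L -> F) (I : (L -> C) -> C) (Phi : L -> C) : L -> C :=
  fun x => I (fun y => Phi y * tau (tF (x * y))).

Definition self_dual (F : fieldType) (L : fieldExtType F) (v : F -> int)
    (nF tF : L -> F) (C : numClosedFieldType) (tau : F -> C) (I : (L -> C) -> C) : Prop :=
  forall Phi, schwartz v nF Phi ->
    forall x, fourier tau tF I (fourier tau tF I Phi) x = Phi (- x).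

Definition add_char_conductor (F : fieldType) (v : F -> int) (C : numClosedFieldType)
    (tau : F -> C) (c : int) : Prop :=
  (forall x y, tau (x + y) = tau x * tau y) /\
  (forall m : int, (forall x, inPow v m x -> tau x = 1) <-> c <= m).

Definition omega_char (F : fieldType) (L : fieldExtType F) (nF : L -> F)
    (C : numClosedFieldType) (omega : F -> C) : Prop :=
  [/\ (forall a b : F, a != 0 -> b != 0 -> omega (a * b) = omega a * omega b),
      omega 1 = 1,
      (forall y : L, y != 0 -> omega (nF y) = 1)
    & (exists a : F, a != 0 /\ omega a != 1)].

Definition char_not_via_norm (F : fieldType) (L : fieldExtType F) (v : F -> int)
    (nF : L -> F) (C : numClosedFieldType) (chi : L -> C) : Prop :=
  [/\ (forall x y : L, x != 0 -> y != 0 -> chi (x * y) = chi x * chi y),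
      chi 1 = 1,
      (exists k : int, (0 < k) /\ forall u : L, inPowL v nF k (u - 1) -> chi u = 1)
    & ~ (exists mu : F -> C, forall x : L, x != 0 -> chi x = mu (nF x))].

Definition S_chi (F : fieldType) (L : fieldExtType F) (v : F -> int)
    (nF : L -> F) (C : numClosedFieldType) (chi : L -> C) (Phi : L -> C) : Prop :=
  schwartz v nF Phi /\
  (forall x y : L, nF y = 1 -> Phi (x * y) = (chi y)^-1 * Phi x).

Definition mx2 (F : fieldType) (a b c d : F) : 'M[F]_2 :=
  \matrix_(i < 2, j < 2)
    if i == 0 then (if j == 0 then a else b) else (if j == 0 then c else d).

Definition in_Gplus (F : fieldType) (L : fieldExtType F) (nF : L -> F)
    (g : 'M[F]_2) : Prop :=
  \det g != 0 /\ exists y : L, y != 0 /\ \det g = nF y.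

Definition in_Kn (F : fieldType) (v : F -> int) (n : nat) (g : 'M[F]_2) : Prop :=
  [/\ forall i j, inPow v 0 (g i j),
      \det g != 0, v (\det g) = 0
    & forall i j, inPow v n%:Z ((g - 1%:M) i j)].

Definition weil_rep (F : fieldType) (v : F -> int) (q : nat) (L : fieldExtType F)
    (sig : L -> L) (nF tF : L -> F) (C : numClosedFieldType)
    (omega tau : F -> C) (chi : L -> C) (I : (L -> C) -> C) (gamma : C)
    (pi : 'M[F]_2 -> (L -> C) -> (L -> C)) : Prop :=
  [/\
      (forall g Phi, in_Gplus nF g -> S_chi v nF chi Phi -> S_chi v nF chi (pi g Phi)),
      (forall g Phi Psi, in_Gplus nF g -> S_chi v nF chi Phi -> S_chi v nF chi Psi ->
          pi g (fun x => Phi x + Psi x) = (fun x => pi g Phi x + pi g Psi x))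
    & (forall g (a : C) Phi, in_Gplus nF g -> S_chi v nF chi Phi ->
          pi g (fun x => a * Phi x) = (fun x => a * pi g Phi x))] /\
  (
      (forall Phi, S_chi v nF chi Phi -> pi 1%:M Phi = Phi) /\
      (forall g h Phi, in_Gplus nF g -> in_Gplus nF h -> S_chi v nF chi Phi ->
          pi (g *m h) Phi = pi g (pi h Phi))) /\
  [/\
      (forall (u : F) Phi, S_chi v nF chi Phi ->
          pi (mx2 1 u 0 1) Phi = (fun x => tau (u * nF x) * Phi x)),
      (forall (a : F) Phi, a != 0 -> S_chi v nF chi Phi ->
          pi (mx2 a 0 0 a^-1) Phi =
          (fun x => omega a * (q%:R : C) ^ (- v a) * Phi (a *: x)))
    & (forall Phi, S_chi v nF chi Phi ->
          pi (mx2 0 1 (-1) 0) Phi = (fun x => gamma * fourier tau tF I Phi (sig x)))].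

Definition ceil_half (z : int) : int := ((z + 1) %/ 2)%Z.

From HB Require Import structures.
From mathcomp Require Import all_boot all_order all_algebra all_field.
From mathcomp Require Import zify ring.
From Stdlib Require Import FunctionalExtensionality.
Import Order.TTheory GRing.Theory Num.Theory.
Local Open Scope ring_scope.
Set Implicit Arguments. Unset Strict Implicit.

(* The upper unipotent matrices of K_n act by Phi(x) |-> tau(u N x) Phi(x), so
   wherever Phi(x) <> 0 the character tau is trivial on p^(n + v(N x)); the
   conductor of tau then bounds v(N x) from below, which is the support claim.
   The Weyl element w conjugates the lower unipotents of K_n into upper ones,
   so pi(w) Phi obeys the same support bound; and since pi(w)^2 = pi(-1),
   Phi(-x) is a multiple of the Fourier transform of pi(w) Phi at conj(x).
   The Fourier transform of a function supported in p_L^k is invariant under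
   translation by p_L^(c-k), because the trace maps p_L^c into p^c (integrality
   of the trace, proved with Hensel's lemma) and tau is trivial on p^c. *)

Definition weyl (F : fieldType) : 'M[F]_2 := mx2 0 1 (-1) 0.
Arguments weyl {F}.

Lemma det_mx2 (F : fieldType) (a b c d : F) : \det (mx2 a b c d) = a * d - b * c.
Proof.
rewrite (expand_det_row _ 0) !big_ord_recl big_ord0 /cofactor !det_mx11 !mxE /=.
by rewrite /bump /= !add0n addn0 expr0 expr1; ring.
Qed.

Lemma mul_mx2 (F : fieldType) (a b c d a' b' c' d' : F) :
  mx2 a b c d *m mx2 a' b' c' d' =
  mx2 (a * a' + b * c') (a * b' + b * d') (c * a' + d * c') (c * b' + d * d').
Proof.
apply/matrixP => i j; rewrite !mxE !big_ord_recl big_ord0 !mxE.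
by case: i => [[|[|//]] ?]; case: j => [[|[|//]] ?]; rewrite /= ?addr0.
Qed.

Lemma mx2_sub1 (F : fieldType) (a b c d : F) :
  mx2 a b c d - 1%:M = mx2 (a - 1) b c (d - 1).
Proof.
apply/matrixP => i j; rewrite !mxE.
by case: i => [[|[|//]] ?]; case: j => [[|[|//]] ?]; rewrite /= ?subr0.
Qed.

Lemma forall_mx2 (F : fieldType) (P : F -> Prop) (a b c d : F) :
  P a -> P b -> P c -> P d -> forall i j, P (mx2 a b c d i j).
Proof. by move=> ? ? ? ? [[|[|//]] ?] [[|[|//]] ?]; rewrite mxE. Qed.

Section Valuation.
Variables (F : fieldType) (v : F -> int).
Hypothesis vM : forall x y : F, x != 0 -> y != 0 -> v (x * y) = v x + v y.

Lemma valuation1 : v 1 = 0.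
Proof.
have h : v (1 * 1) = v 1 + v 1 := vM (oner_neq0 F) (oner_neq0 F).
by rewrite mulr1 in h; lia.
Qed.

Lemma valuationN1 : v (-1) = 0.
Proof.
have N1 : (-1 : F) != 0 by rewrite oppr_eq0 oner_neq0.
by have := vM N1 N1; rewrite mulrNN mulr1 valuation1; lia.
Qed.

Lemma valuationN x : x != 0 -> v (- x) = v x.
Proof.
by move=> x0; rewrite -mulN1r vM ?valuationN1 ?add0r // oppr_eq0 oner_neq0.
Qed.

Lemma valuationV x : x != 0 -> v x^-1 = - v x.
Proof. by move=> x0; have := vM x0 (invr_neq0 x0); rewrite divff // valuation1; lia. Qed.

Lemma inPow0 m : inPow v m 0.
Proof. by rewrite /inPow eqxx. Qed.

Lemma inPowW m m' x : m' <= m -> inPow v m x -> inPow v m' x.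
Proof. by rewrite /inPow => ? /orP [->//|?]; apply/orP; right; lia. Qed.

Lemma inPowN m x : inPow v m (- x) = inPow v m x.
Proof.
have [->|x0] := eqVneq x 0; first by rewrite oppr0.
by rewrite /inPow oppr_eq0 valuationN.
Qed.

Lemma inPowM m a b x y : m <= a + b ->
  inPow v a x -> inPow v b y -> inPow v m (x * y).
Proof.
have [->|x0] := eqVneq x 0; first by move=> *; rewrite mul0r inPow0.
have [->|y0] := eqVneq y 0; first by move=> *; rewrite mulr0 inPow0.
rewrite /inPow mulf_eq0 (negbTE x0) (negbTE y0) /= vM //; lia.
Qed.

Lemma inPow1 : inPow v 0 1.
Proof. by rewrite /inPow valuation1 lexx orbT. Qed.

Lemma inPow_eq0 x : (forall m, inPow v m x) -> x = 0.
Proof.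
move=> hx; apply/eqP; apply: contraT => x0.
by have := hx (v x + 1); rewrite /inPow (negbTE x0) /=; lia.
Qed.

Hypothesis vU : forall x y : F, x != 0 -> y != 0 -> x + y != 0 ->
  (v x <= v (x + y)) || (v y <= v (x + y)).

Lemma valuation2_ge0 : (1 + 1 : F) != 0 -> 0 <= v (1 + 1).
Proof.
by move=> two0; have := vU (oner_neq0 F) (oner_neq0 F) two0; rewrite valuation1 orbb.
Qed.

Lemma inPowD m x y : inPow v m x -> inPow v m y -> inPow v m (x + y).
Proof.
have [->|x0] := eqVneq x 0; first by rewrite add0r.
have [->|y0] := eqVneq y 0; first by rewrite addr0.
have [->|s0] := eqVneq (x + y) 0; first by rewrite inPow0.
rewrite /inPow (negbTE x0) (negbTE y0) (negbTE s0) /=.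
by have /orP[] := vU x0 y0 s0; lia.
Qed.

Lemma inPowB m x y : inPow v m x -> inPow v m y -> inPow v m (x - y).
Proof. by move=> hx hy; rewrite inPowD // inPowN. Qed.

Lemma in_Kn_mx2 (n : nat) (a b c d : F) : a * d - b * c = 1 ->
  inPow v n (a - 1) -> inPow v n b -> inPow v n c -> inPow v n (d - 1) ->
  in_Kn v n (mx2 a b c d).
Proof.
move=> det1 ha hb hc hd.
have int x : inPow v n x -> inPow v 0 x by apply: inPowW.
have int1 x : inPow v n (x - 1) -> inPow v 0 x.
  by move=> /int hx; rewrite -(subrK 1 x) inPowD ?inPow1.
split; rewrite ?det_mx2 ?det1 ?valuation1 ?oner_neq0 //.
  by apply: (forall_mx2 (P := inPow v 0)); auto.
by rewrite mx2_sub1; apply: (forall_mx2 (P := inPow v n)).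
Qed.

Lemma in_Kn_upper (n : nat) (u : F) : inPow v n u -> in_Kn v n (mx2 1 u 0 1).
Proof. by move=> hu; apply: in_Kn_mx2; rewrite ?subrr ?inPow0 //; ring. Qed.

Lemma in_Kn_lower (n : nat) (u : F) : inPow v n u -> in_Kn v n (mx2 1 0 u 1).
Proof. by move=> hu; apply: in_Kn_mx2; rewrite ?subrr ?inPow0 //; ring. Qed.

Section Hensel.
Hypothesis vC : forall u : nat -> F,
  (forall m : int, exists N : nat, forall i j : nat, (N <= i)%N -> (N <= j)%N ->
     inPow v m (u i - u j)) ->
  exists l : F, forall m : int, exists N : nat, forall i : nat, (N <= i)%N ->
     inPow v m (u i - l).
Variable eps : F.
Hypothesis eps_in_p : inPow v 1 eps.

(* r |-> r^2 + eps is a contraction of p, so this converges to a root of X^2 - X + eps. *)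
Definition hensel_seq (k : nat) : F := iter k (fun r => r ^+ 2 + eps) 0.

Lemma hensel_seqS k : hensel_seq k.+1 = hensel_seq k ^+ 2 + eps.
Proof. by []. Qed.

Lemma hensel_seq_in_p k : inPow v 1 (hensel_seq k).
Proof.
elim: k => [|k IH]; first exact: inPow0.
by rewrite hensel_seqS inPowD // expr2 (inPowM (a := 1) (b := 1)).
Qed.

Lemma hensel_seq_step k : inPow v k.+1 (hensel_seq k.+1 - hensel_seq k).
Proof.
elim: k => [|k IH]; first by rewrite hensel_seqS expr2 mul0r add0r subr0.
have -> : hensel_seq k.+2 - hensel_seq k.+1 =
    (hensel_seq k.+1 - hensel_seq k) * (hensel_seq k.+1 + hensel_seq k).
  by rewrite (hensel_seqS k.+1) {2}(hensel_seqS k); ring.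
apply: (inPowM (a := k.+1%:Z) (b := 1)) => //; first lia.
by rewrite inPowD ?hensel_seq_in_p.
Qed.

Lemma hensel_seq_cauchy N d : inPow v N.+1 (hensel_seq (N + d) - hensel_seq N).
Proof.
elim: d => [|d IH]; first by rewrite addn0 subrr inPow0.
have -> : hensel_seq (N + d.+1) - hensel_seq N =
    (hensel_seq (N + d).+1 - hensel_seq (N + d)) + (hensel_seq (N + d) - hensel_seq N).
  by rewrite addnS; ring.
by rewrite inPowD // (inPowW _ (hensel_seq_step _)) //; lia.
Qed.

Lemma hensel_quadratic : exists r, r ^+ 2 + eps = r.
Proof.
have [l hl] : exists l, forall m : int, exists N : nat, forall i, (N <= i)%N ->
    inPow v m (hensel_seq i - l).
  apply: vC => m; exists `|m|%N => i j hi hj.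
  have -> : hensel_seq i - hensel_seq j =
      (hensel_seq i - hensel_seq `|m|) - (hensel_seq j - hensel_seq `|m|) by ring.
  rewrite -(subnKC hi) -(subnKC hj).
  by rewrite inPowB // (inPowW _ (hensel_seq_cauchy _ _)) //; lia.
exists l; apply/eqP; rewrite -subr_eq0; apply/eqP; apply: inPow_eq0 => m.
have [N hN] := hl `|m|%:Z.
have lN : inPow v `|m| (l - hensel_seq N) by rewrite -inPowN opprB hN.
have lN_int : inPow v 0 (l + hensel_seq N).
  rewrite -(subrK (hensel_seq N) l) -addrA inPowD ?(inPowW _ lN) //.
  by rewrite inPowD // (inPowW _ (hensel_seq_in_p N)).
have -> : l ^+ 2 + eps - l =
    (l - hensel_seq N) * (l + hensel_seq N) + (hensel_seq N.+1 - l).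
  by rewrite hensel_seqS; ring.
apply: (inPowW (m := `|m|%:Z)); first lia.
by rewrite inPowD ?hN // (inPowM (a := `|m|%:Z) (b := 0)) //; lia.
Qed.

End Hensel.
End Valuation.

Section QuadraticExtension.
Variables (F : fieldType) (L : fieldExtType F) (sig : L -> L) (nF tF : L -> F).
Hypothesis hq : is_quad_ext sig nF tF.

Let conjD x y : sig (x + y) = sig x + sig y. Proof. by case: hq => _ [[]]. Qed.
Let conjM x y : sig (x * y) = sig x * sig y. Proof. by case: hq => _ [[]]. Qed.
Let conj_alg (a : F) : sig a%:A = a%:A. Proof. by case: hq => _ [[]]. Qed.
Let conjK x : sig (sig x) = x. Proof. by case: hq => _ [[]]. Qed.
Let normE x : (nF x)%:A = x * sig x. Proof. by case: hq => _ [_ []]. Qed.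
Let traceE x : (tF x)%:A = x + sig x. Proof. by case: hq => _ [_ []]. Qed.

Let alg_inj : injective (in_alg L) := fmorph_inj (in_alg L).

Lemma conj0 : sig 0 = 0.
Proof. by apply: (addrI (sig 0)); rewrite -conjD !addr0. Qed.

Lemma conjN x : sig (- x) = - sig x.
Proof. by apply: (addrI (sig x)); rewrite -conjD !subrr conj0. Qed.

Lemma conjB x y : sig (x - y) = sig x - sig y.
Proof. by rewrite conjD conjN. Qed.

Lemma conj_eq0 x : (sig x == 0) = (x == 0).
Proof.
apply/eqP/eqP => [sx0|->]; last exact: conj0.
by rewrite -(conjK x) sx0 conj0.
Qed.

Lemma norm_eq0 x : (nF x == 0) = (x == 0).
Proof.
apply/eqP/eqP => [N0|->]; last by apply: alg_inj; rewrite /= normE mul0r scale0r.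
apply/eqP; move: (normE x); rewrite N0 scale0r => /esym/eqP.
by rewrite mulf_eq0 conj_eq0 orbb.
Qed.

Lemma normM x y : nF (x * y) = nF x * nF y.
Proof. by apply: alg_inj; rewrite rmorphM /= !normE conjM; ring. Qed.

Lemma normN x : nF (- x) = nF x.
Proof. by apply: alg_inj; rewrite /= !normE conjN mulrNN. Qed.

Lemma norm_conj x : nF (sig x) = nF x.
Proof. by apply: alg_inj; rewrite /= !normE conjK mulrC. Qed.

Lemma norm1 : nF 1 = 1.
Proof.
have conj1 : sig 1 = 1 by have := conj_alg 1; rewrite scale1r.
by apply: alg_inj; rewrite /= normE conj1 mulr1 scale1r.
Qed.

Lemma traceD x y : tF (x + y) = tF x + tF y.
Proof. by apply: alg_inj; rewrite rmorphD /= !traceE conjD; ring. Qed.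

Lemma trace0 : tF 0 = 0.
Proof. by apply: alg_inj; rewrite /= traceE conj0 addr0 scale0r. Qed.

Lemma Gplus_mx2 (a b c d : F) : a * d - b * c = 1 -> in_Gplus nF (mx2 a b c d).
Proof.
move=> det1; rewrite /in_Gplus det_mx2 det1 oner_neq0; split=> //.
by exists 1; rewrite norm1 oner_neq0.
Qed.

Section Valued.
Variable v : F -> int.
Hypothesis vM : forall x y : F, x != 0 -> y != 0 -> v (x * y) = v x + v y.

Lemma inPowL_conj k x : inPowL v nF k (sig x) = inPowL v nF k x.
Proof. by rewrite /inPowL conj_eq0 norm_conj. Qed.

Lemma inPowLN k x : inPowL v nF k (- x) = inPowL v nF k x.
Proof. by rewrite /inPowL oppr_eq0 normN. Qed.

Lemma inPowLM a b x y :
  inPowL v nF a x -> inPowL v nF b y -> inPowL v nF (a + b) (x * y).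
Proof.
have [->|x0] := eqVneq x 0; first by rewrite mul0r /inPowL eqxx.
have [->|y0] := eqVneq y 0; first by rewrite mulr0 /inPowL eqxx.
rewrite /inPowL mulf_eq0 (negbTE x0) (negbTE y0) normM vM ?norm_eq0 //=; lia.
Qed.

Lemma inPowL_ceil_half (m : int) z : unramified v nF -> z != 0 ->
  m <= v (nF z) -> inPowL v nF (ceil_half m) z.
Proof.
move=> ur z0 hm; have /dvdzP[j vj] := ur z z0.
by rewrite /inPowL /ceil_half vj; apply/orP; right; lia.
Qed.

Lemma support_of_tau_invariant (C : numClosedFieldType) (tau : F -> C) (c n : int)
    (Psi : L -> C) :
  add_char_conductor v tau c -> unramified v nF ->
  (forall u z, inPow v n u -> tau (u * nF z) * Psi z = Psi z) ->
  forall z, Psi z != 0 -> inPowL v nF (ceil_half (c - n)) z.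
Proof.
move=> [_ conductor] ur inv z Pz.
have [->|z0] := eqVneq z 0; first by rewrite /inPowL eqxx.
have N0 : nF z != 0 by rewrite norm_eq0.
apply: inPowL_ceil_half => //.
suff : c <= n + v (nF z) by lia.
apply/conductor => a ha; apply: (mulIf Pz); rewrite mul1r.
have -> : a = a / nF z * nF z by rewrite divfK.
apply: inv; apply: (inPowM vM (a := n + v (nF z)) (b := - v (nF z))) => //; first lia.
by rewrite /inPow (valuationV vM) // lexx orbT.
Qed.

Hypothesis vU : forall x y : F, x != 0 -> y != 0 -> x + y != 0 ->
  (v x <= v (x + y)) || (v y <= v (x + y)).
Hypothesis vC : forall u : nat -> F,
  (forall m : int, exists N : nat, forall i j : nat, (N <= i)%N -> (N <= j)%N ->
     inPow v m (u i - u j)) ->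
  exists l : F, forall m : int, exists N : nat, forall i : nat, (N <= i)%N ->
     inPow v m (u i - l).

(* If eps = N(w)/tr(w)^2 lies in p, Hensel's lemma splits X^2 - tr(w) X + N(w)
   over F, with roots tr(w) r and tr(w) (1 - r) where r^2 + eps = r. *)
Lemma conj_fixed_of_small_norm w :
  tF w != 0 -> inPow v 1 (nF w / tF w ^+ 2) -> sig w = w.
Proof.
move=> t0 eps_p; have [r hr] := hensel_quadratic vM vU vC eps_p.
set t := tF w in t0 eps_p hr; set N := nF w in eps_p hr.
have eps_r : N / t ^+ 2 = r - r ^+ 2 by rewrite -{1}hr addrAC subrr add0r.
have N_r : N = t ^+ 2 * (r - r ^+ 2) by rewrite -eps_r mulrC divfK // expf_neq0.
pose A : L := (t * r)%:A; pose B : L := (t - t * r)%:A.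
have sumAB : A + B = w + sig w by rewrite -traceE -scalerDl addrC subrK.
have prodAB : A * B = w * sig w.
  by rewrite -normE mulr_algl scalerA -/N N_r; congr (_ *: 1); ring.
have : (w - A) * (w - B) = 0.
  have -> : (w - A) * (w - B) = w * w - (A + B) * w + A * B by ring.
  by rewrite sumAB prodAB; ring.
by move/eqP; rewrite mulf_eq0 !subr_eq0 => /orP[]/eqP->; apply: conj_alg.
Qed.

Hypothesis two_neq0 : (1 + 1 : F) != 0.

Lemma trace_inPowL k w : inPowL v nF k w -> inPow v k (tF w).
Proof.
have [->|w0] := eqVneq w 0; first by rewrite trace0 inPow0.
have [t0|t0] := eqVneq (tF w) 0; first by rewrite t0 inPow0.
have N0 : nF w != 0 by rewrite norm_eq0.
rewrite /inPowL /inPow (negbTE w0) (negbTE t0) /= => vN.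
rewrite leNgt; apply/negP => small.
have t2 : tF w ^+ 2 != 0 := expf_neq0 2 t0.
have fixed : sig w = w.
  apply: conj_fixed_of_small_norm => //.
  rewrite /inPow vM ?invr_eq0 // (valuationV vM) // expr2 vM //.
  by apply/orP; right; lia.
have t_sq : tF w ^+ 2 = nF w * (1 + 1) ^+ 2.
  apply: alg_inj; rewrite rmorphXn rmorphM rmorphXn rmorphD rmorph1 /=.
  by rewrite traceE normE fixed; ring.
have := congr1 v t_sq; rewrite !expr2 vM // vM ?mulf_neq0 // vM //.
by have := valuation2_ge0 vM vU two_neq0; lia.
Qed.

Lemma fourier_translate (C : numClosedFieldType) (tau : F -> C) (c k : int)
    (I : (L -> C) -> C) (Psi : L -> C) x y :
  add_char_conductor v tau c ->
  (forall z, Psi z != 0 -> inPowL v nF k z) ->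
  inPowL v nF (c - k) (x - y) ->
  fourier tau tF I Psi x = fourier tau tF I Psi y.
Proof.
move=> [tauD conductor] supp xy; rewrite /fourier; congr I.
apply: functional_extensionality => z.
have [->|Pz] := eqVneq (Psi z) 0; first by rewrite !mul0r.
have -> : x * z = (x - y) * z + y * z by ring.
rewrite traceD tauD (conductor c).2 ?mul1r //.
by rewrite trace_inPowL // -(subrK k c) inPowLM // supp.
Qed.

End Valued.
End QuadraticExtension.

Lemma omega_charN1_neq0 (F : fieldType) (L : fieldExtType F) (nF : L -> F)
    (C : numClosedFieldType) (omega : F -> C) :
  omega_char nF omega -> omega (-1) != 0.
Proof.
case=> omegaM omega1 _ _; have N1 : (-1 : F) != 0 by rewrite oppr_eq0 oner_neq0.
apply: contraTneq isT => omega0.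
by have := omegaM _ _ N1 N1; rewrite mulrNN mulr1 omega1 omega0 mul0r => /eqP; rewrite oner_eq0.
Qed.

Section WeilRepresentation.
Variables (F : fieldType) (v : F -> int) (q : nat) (L : fieldExtType F) (sig : L -> L)
  (nF tF : L -> F) (C : numClosedFieldType) (omega tau : F -> C) (chi : L -> C)
  (I : (L -> C) -> C) (gamma : C) (pi : 'M[F]_2 -> (L -> C) -> (L -> C)) (c : int) (n : nat).
Hypothesis vM : forall x y : F, x != 0 -> y != 0 -> v (x * y) = v x + v y.
Hypothesis vU : forall x y : F, x != 0 -> y != 0 -> x + y != 0 ->
  (v x <= v (x + y)) || (v y <= v (x + y)).
Hypothesis hq : is_quad_ext sig nF tF.
Hypothesis hW : weil_rep v q sig nF tF omega tau chi I gamma pi.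
Hypothesis htau : add_char_conductor v tau c.
Hypothesis ur : unramified v nF.

Let pi_preserves g Phi : in_Gplus nF g -> S_chi v nF chi Phi -> S_chi v nF chi (pi g Phi).
Proof. by case: hW => [[preserves _ _] _]; apply: preserves. Qed.

Let piM g h Phi : in_Gplus nF g -> in_Gplus nF h -> S_chi v nF chi Phi ->
  pi (g *m h) Phi = pi g (pi h Phi).
Proof. by case: hW => _ [[_ hom] _]; apply: hom. Qed.

Let Gplus_weyl : in_Gplus nF weyl.
Proof. by apply: (Gplus_mx2 hq); ring. Qed.

Lemma upper_invariant_support Psi : S_chi v nF chi Psi ->
  (forall u, inPow v n u -> pi (mx2 1 u 0 1) Psi = Psi) ->
  forall z, Psi z != 0 -> inPowL v nF (ceil_half (c - n%:Z)) z.
Proof.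
move=> SPsi inv; apply: (support_of_tau_invariant hq vM htau ur).
move=> u z hu; case: hW => _ [_ [upper _ _]].
by have := congr1 (fun f => f z) (inv u hu); rewrite upper //=.
Qed.

Lemma weyl_upper_invariant Phi : S_chi v nF chi Phi ->
  (forall k, in_Kn v n k -> pi k Phi = Phi) ->
  forall u, inPow v n u -> pi (mx2 1 u 0 1) (pi weyl Phi) = pi weyl Phi.
Proof.
move=> SPhi fixed u hu.
have Gupper : in_Gplus nF (mx2 1 u 0 1) by apply: (Gplus_mx2 hq); ring.
have Glower : in_Gplus nF (mx2 1 0 (- u) 1) by apply: (Gplus_mx2 hq); ring.
rewrite -piM // (_ : mx2 1 u 0 1 *m weyl = weyl *m mx2 1 0 (- u) 1).
  by rewrite piM // fixed //; apply: (in_Kn_lower vM vU); rewrite inPowN.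
by rewrite /weyl !mul_mx2; congr mx2; ring.
Qed.

Lemma weyl_square Phi x : S_chi v nF chi Phi ->
  omega (-1) * Phi (- x) = gamma * fourier tau tF I (pi weyl Phi) (sig x).
Proof.
move=> SPhi; case: hW => _ [_ [_ diag piw]].
have := congr1 (fun f => f x) (piM Gplus_weyl Gplus_weyl SPhi).
rewrite (_ : weyl *m weyl = mx2 (-1) 0 0 (-1)^-1); last first.
  by rewrite /weyl mul_mx2 invrN1; congr mx2; ring.
rewrite diag ?oppr_eq0 ?oner_eq0 // [in RHS]piw /=; last exact: pi_preserves.
by rewrite (valuationN1 vM) oppr0 expr0z mulr1 scaleN1r.
Qed.

Lemma weyl_support Phi : S_chi v nF chi Phi ->
  (forall k, in_Kn v n k -> pi k Phi = Phi) ->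
  forall z, pi weyl Phi z != 0 -> inPowL v nF (ceil_half (c - n%:Z)) z.
Proof.
move=> SPhi fixed; apply: upper_invariant_support => //.
  exact: pi_preserves.
exact: weyl_upper_invariant.
Qed.

End WeilRepresentation.
Unset Implicit Arguments.

Theorem lemma8p2 (F : fieldType) (v : F -> int) (p q : nat)
    (L : fieldExtType F) (sig : L -> L) (nF tF : L -> F)
    (C : numClosedFieldType) (omega tau : F -> C) (c : int)
    (chi : L -> C) (I : (L -> C) -> C) (gamma : C)
    (pi : 'M[F]_2 -> (L -> C) -> (L -> C)) (n : nat) (Phi : L -> C) :
  is_pAdic_field v p q ->
  is_quad_ext sig nF tF ->
  unramified v nF ->
  omega_char nF omega ->
  add_char_conductor v tau c ->
  char_not_via_norm v nF chi ->
  haar_integral v nF I ->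
  self_dual v nF tF tau I ->
  `|gamma| = 1 ->
  weil_rep v q sig nF tF omega tau chi I gamma pi ->
  (1 <= n)%N ->
  S_chi v nF chi Phi ->
  (forall k, in_Kn v n k -> pi k Phi = Phi) ->
  (forall x : L, Phi x != 0 -> inPowL v nF (ceil_half (c - n%:Z)) x) /\
  (forall x y : L, inPowL v nF (c - ceil_half (c - n%:Z)) (x - y) -> Phi x = Phi y).
Proof.
move=> hF hq ur hom htau _ _ _ _ hW _ SPhi fixed.
have [vM [vU [_ [vC [char0 _]]]]] := hF.
have two_neq0 : (1 + 1 : F) != 0 := char0 2%N isT.
split.
  apply: (upper_invariant_support vM hq hW htau ur SPhi) => u hu.
  exact/fixed/(in_Kn_upper vM vU).
move=> a b ab; apply: (mulfI (omega_charN1_neq0 hom)).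
have := weyl_square vM hq hW (- a) SPhi; have := weyl_square vM hq hW (- b) SPhi.
rewrite !opprK => -> ->; congr (_ * _).
have suppPsi := weyl_support vM vU hq hW htau ur SPhi fixed.
apply: (fourier_translate hq vM vU vC two_neq0 _ htau suppPsi).
by rewrite -(conjB hq) (inPowL_conj hq) -opprD (inPowLN hq).
Qed.
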